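(* Let $A_1,A_2,A_3$ be finite subsets of $\mathbb{R}$ with $|A_1|\le|A_2|\le|A_3|$. Let $\mathcal{L}$ be the set of lines $l$ in $\mathbb{R}^2$ that contain three distinct points $u_1,u_2,u_3$ with $u_i\in A_i\times A_i$ ($i=1,2,3$). For $l\in\mathcal{L}$ put $\alpha_{i,l}=|l\cap(A_i\times A_i)|$, and let $\mathcal{L}_{i,2}=\{l\in\mathcal{L}:\alpha_{i,l}\ge 2\}$. Then for every $i\in\{1,2,3\}$ and every real $1\le p\le 3$, \[ \sum_{l\in\mathcal{L}_{i,2}}\alpha_{i,l}^{\,p}\lesssim |A_1|^{3-p}|A_i|^{p+1}. \]
   Context: Notation: $X\lesssim Y$ means $X\le C\,Y(\log(2+N))^{c}$ for some absolute constants $C,c>0$, where $N$ is the largest cardinality of the finite sets in the statement. *)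

From HB Require Import structures.
From mathcomp Require Import all_boot all_order all_algebra.
From mathcomp Require Import finmap.
From mathcomp Require Import all_classical all_reals all_analysis.
Set Implicit Arguments. Unset Strict Implicit. Unset Printing Implicit Defensive.
Import Order.TTheory GRing.Theory Num.Theory.
Local Open Scope classical_set_scope.
Local Open Scope ring_scope.

Section Defs.
Variable R : realType.

Definition is_line (l : set (R * R)) : Prop :=
  exists a b c : R, (a != 0 \/ b != 0) /\ l = [set u | a * u.1 + b * u.2 = c].

Definition sqset (A : {fset R}) : set (R * R) := [set u | u.1 \in A /\ u.2 \in A].

Definition alpha (A : {fset R}) (l : set (R * R)) : nat :=
  #|` [fset u in fsetM A A | `[< l u >]]%fset |.

Definition rich_lines (A1 A2 A3 : {fset R}) : set (set (R * R)) :=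
  [set l | is_line l /\ exists u1 u2 u3 : R * R,
     [/\ sqset A1 u1, sqset A2 u2, sqset A3 u3,
         [/\ l u1, l u2 & l u3] &
         [/\ u1 != u2, u1 != u3 & u2 != u3]]].

Definition lines_i2 (A1 A2 A3 Ai : {fset R}) : set (set (R * R)) :=
  [set l | rich_lines A1 A2 A3 l /\ (2 <= alpha Ai l)%N].

End Defs.

From HB Require Import structures.
From mathcomp Require Import all_boot all_order all_algebra.
From mathcomp Require Import finmap.
From mathcomp Require Import all_classical all_reals all_analysis.
From mathcomp Require Import ring lra zify.
Set Implicit Arguments. Unset Strict Implicit. Unset Printing Implicit Defensive.
Import Order.TTheory GRing.Theory Num.Theory.
Local Open Scope classical_set_scope.
Local Open Scope ring_scope.

(* For a finite A in R with n = |A| and a line l, alpha_l = |l ∩ A x A|.  The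
   bound on sum_l alpha_l^p over L_{i,2} interpolates between two moments:

   - first moment: a line of L_{i,2} contains a point u of A1 x A1 and a
     second point v of Ai x Ai, and (u, v) determines it; hence
     sum_l alpha_l <= 2 |A1|^2 |Ai|^2 (first_moment);
   - third moment: listing the grid points of l along l, both coordinates are
     monotone, so their ranks in A form monotone sequences of length alpha_l
     in [0, n]; by Jensen's inequality, alpha_l^3 <= 32 n^2 E(l), where the
     energy E(l) sums the weight 1/((|Δ rank x| + 1)(|Δ rank y| + 1)) over
     pairs of distinct points of l (line_energy_lower).  Two points lie on at
     most one line, and the total weight of all pairs is at most
     n^2 (2 H_n)^2 with H_n <= 3 ln (2 + n); so sum_l alpha_l^3 <=
     1152 n^4 ln (2 + n)^2 (third_moment);
   - interpolation: for T = |Ai| / |A1| and 1 <= p <= 3,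
     x^p <= T^(p-1) x + T^(p-3) x^3 (powR_le_moments, rich_lines_moment). *)

Section Sums.
Variable R : numDomainType.

Lemma sum_le_uniq_sub (T : eqType) (s D : seq T) (F : T -> R) :
  uniq s -> uniq D -> {subset s <= D} -> (forall x, x \in D -> 0 <= F x) ->
  \sum_(x <- s) F x <= \sum_(x <- D) F x.
Proof.
move=> us uD sD F0; rewrite [X in _ <= X](bigID (mem s)) /=.
have -> : \sum_(x <- s) F x = \sum_(x <- D | x \in s) F x.
  rewrite -[RHS]big_filter; apply/perm_big/uniq_perm; rewrite ?filter_uniq // => x.
  by rewrite mem_filter; case: (boolP (x \in s)) => // /sD ->.
by rewrite lerDl big_seq_cond sumr_ge0 // => x /andP[/F0].
Qed.

End Sums.

Section ConvexityInequalities.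
Variable R : realFieldType.

(* The tangent at s of the convex function z |-> 1/z^2 lies below it. *)
Lemma inv_sqr_tangent (z s : R) : 0 < z -> 0 < s ->
  (3 * s - 2 * z) / s ^+ 3 <= (z ^+ 2)^-1.
Proof.
move=> z0 s0; rewrite -subr_ge0.
have -> : (z ^+ 2)^-1 - (3 * s - 2 * z) / s ^+ 3
          = (s - z) ^+ 2 * (s + 2 * z) / (z ^+ 2 * s ^+ 3).
  by field; rewrite !gt_eqF.
apply: divr_ge0; last by rewrite mulr_ge0 ?exprn_ge0 ?ltW.
by rewrite mulr_ge0 ?sqr_ge0 // addr_ge0 ?mulr_ge0 ?ltW.
Qed.

(* Jensen's inequality for 1/z^2: k^3 / (sum z)^2 <= sum 1/z^2, obtained by
   summing the tangent inequality at the mean of the z_t. *)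
Lemma sum_inv_sqr_ge (k : nat) (z : nat -> R) : (0 < k)%N -> (forall t, 0 < z t) ->
  k%:R ^+ 3 / (\sum_(t < k) z t) ^+ 2 <= \sum_(t < k) (z t ^+ 2)^-1.
Proof.
move=> k0 z0; set S := \sum_(t < k) z t.
have S0 : 0 < S.
  rewrite /S; case: k k0 {S} => // k _; rewrite big_ord_recl.
  by rewrite ltr_pwDl // sumr_ge0 // => t _; exact: ltW.
have k0' : 0 < k%:R :> R by rewrite ltr0n.
have s0 : 0 < S / k%:R by exact: divr_gt0.
apply: (@le_trans _ _ (\sum_(t < k) (3 * (S / k%:R) - 2 * z t) / (S / k%:R) ^+ 3));
  last by apply: ler_sum => t _; exact: inv_sqr_tangent.
rewrite -mulr_suml sumrB -mulr_sumr sumr_const card_ord -/S -mulr_sumr -/S -mulr_natr.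
by rewrite le_eqVlt; apply/orP; left; apply/eqP; field; rewrite !gt_eqF.
Qed.

Lemma inv_mul_le_sqr_sum (a b : R) : 0 <= a -> 0 <= b ->
  4 * ((a + b + 2) ^+ 2)^-1 <= ((a + 1) * (b + 1))^-1.
Proof.
move=> a0 b0.
have P0 : 0 < (a + 1) * (b + 1) by apply: mulr_gt0; lra.
have Z0 : 0 < (a + b + 2) ^+ 2 by apply: exprn_gt0; lra.
rewrite ler_pdivrMr // ler_pdivlMl //.
have := sqr_ge0 (a - b); nra.
Qed.

Definition monotone_upto (k : nat) (G : nat -> nat) : Prop :=
  (forall t, (t < k)%N -> (G t <= G t.+1)%N) \/
  (forall t, (t < k)%N -> (G t.+1 <= G t)%N).

(* The total variation of a monotone sequence with values in [0, n] is at
   most n, since the sum of its increments telescopes. *)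
Lemma monotone_variation_le (n k : nat) (G : nat -> nat) :
  monotone_upto k G -> (forall t, (G t <= n)%N) ->
  \sum_(t < k) `|(G t.+1)%:R - (G t)%:R| <= n%:R :> R.
Proof.
move=> Gm Gn.
have tele : \sum_(t < k) ((G t.+1)%:R - (G t)%:R) = (G k)%:R - (G 0)%:R :> R.
  by rewrite -(big_mkord xpredT (fun t => (G t.+1)%:R - (G t)%:R)) telescope_sumr.
have G0 : (G 0)%:R <= n%:R :> R by rewrite ler_nat.
have Gk : (G k)%:R <= n%:R :> R by rewrite ler_nat.
case: Gm => Gm.
  rewrite (eq_bigr (fun t : 'I_k => (G t.+1)%:R - (G t)%:R)) ?tele.
    by have := ler0n R (G 0); lra.
  by move=> t _; rewrite ger0_norm // subr_ge0 ler_nat Gm.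
rewrite (eq_bigr (fun t : 'I_k => - ((G t.+1)%:R - (G t)%:R))) ?sumrN ?tele.
  by have := ler0n R (G k); lra.
by move=> t _; rewrite ler0_norm // subr_le0 ler_nat Gm.
Qed.

(* The k gaps z_t = |dF| + |dG| + 2 have total at most 4n, so Jensen and
   AM-GM bound the right-hand side from below. *)
Lemma monotone_pair_gap_bound (n k : nat) (F G : nat -> nat) :
  (k <= n)%N -> monotone_upto k F -> monotone_upto k G ->
  (forall t, (F t <= n)%N /\ (G t <= n)%N) ->
  k%:R ^+ 3 <= 4 * n%:R ^+ 2 * \sum_(t < k)
    ((`|(F t.+1)%:R - (F t)%:R| + 1) * (`|(G t.+1)%:R - (G t)%:R| + 1))^-1 :> R.
Proof.
move=> kn Fm Gm FGn.
case: (posnP k) => [->|k0]; first by rewrite big_ord0 mulr0 expr0n.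
have n0N : (0 < n)%N := leq_trans k0 kn.
have n0 : 0 < n%:R :> R by rewrite ltr0n.
pose a t : R := `|(F t.+1)%:R - (F t)%:R|.
pose b t : R := `|(G t.+1)%:R - (G t)%:R|.
pose z t := a t + b t + 2.
have z0 t : 0 < z t by apply: ltr_wpDl => //; apply: addr_ge0; exact: normr_ge0.
have Sz : \sum_(t < k) z t <= 4 * n%:R.
  have Sa := monotone_variation_le Fm (fun t => (FGn t).1).
  have Sb := monotone_variation_le Gm (fun t => (FGn t).2).
  have := ler_nat R k n; rewrite kn => kn'.
  rewrite /z !big_split /= sumr_const card_ord -mulr_natr; lra.
have Sz0 : 0 < \sum_(t < k) z t.
  by rewrite (bigD1 (Ordinal k0)) //= ltr_pwDl ?sumr_ge0 // => t _; exact: ltW.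
apply: (@le_trans _ _ (4 * n%:R ^+ 2 * (4 * (k%:R ^+ 3 / (\sum_(t < k) z t) ^+ 2)))).
  have E : 4 * n%:R ^+ 2 * (4 * (k%:R ^+ 3 / (4 * n%:R) ^+ 2)) = k%:R ^+ 3 :> R.
    by field; rewrite gt_eqF.
  rewrite -[X in X <= _]E !ler_pM2l ?exprn_gt0 ?mulr_gt0 ?ltr0n //.
  rewrite lef_pV2 ?posrE ?exprn_gt0 ?mulr_gt0 // lerXn2r // nnegrE ltW //.
  by rewrite mulr_gt0.
rewrite ler_pM2l ?mulr_gt0 ?exprn_gt0 //.
apply: (@le_trans _ _ (4 * \sum_(t < k) (z t ^+ 2)^-1)).
  by rewrite ler_pM2l // sum_inv_sqr_ge.
by rewrite mulr_sumr; apply: ler_sum => t _; apply: inv_mul_le_sqr_sum; exact: normr_ge0.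
Qed.

End ConvexityInequalities.

Section RealPowers.
Variable R : realType.

(* The harmonic numbers grow logarithmically: H_n <= 3 ln (2 + n).  Each new
   term 1/(n+1) is bounded by 3 (ln (n+3) - ln (n+2)) via ln (1 - x) <= - x. *)
Lemma harmonic_le_ln (n : nat) :
  \sum_(k < n) (k.+1%:R)^-1 <= 3 * ln (2 + n%:R) :> R.
Proof.
elim: n => [|n IH]; first by rewrite big_ord0 mulr_ge0 // ln_ge0 //; lra.
rewrite big_ord_recr /=.
have n0 := ler0n R n.
have e2 : 2 + n.+1%:R = n.+3%:R :> R by rewrite -[n.+3]addn2 natrD addrC.
have step : (n.+1%:R)^-1 <= 3 * (ln (2 + n.+1%:R) - ln (2 + n%:R)) :> R.
  have lnq : ln (1 - (n.+3%:R)^-1) <= - (n.+3%:R)^-1 :> R.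
    by apply: le_ln1Dx; rewrite ltrNl opprK invf_lt1 ?ltr0n // ltr1n.
  have q : 1 - (n.+3%:R)^-1 = (2 + n%:R) * (2 + n.+1%:R)^-1 :> R.
    by rewrite e2 -[n.+3]addn3 natrD; field; rewrite gt_eqF //; lra.
  have pos2n m : (2 + m%:R : R) \is Num.pos by rewrite posrE ltr_wpDr.
  rewrite q lnM ?pos2n ?posrE ?invr_gt0 -?posrE ?pos2n // lnV ?pos2n // e2 in lnq.
  rewrite e2.
  have h : (n.+1%:R)^-1 <= 3 * (n.+3%:R)^-1 :> R.
    rewrite -[X in X <= _]mul1r ler_pdivrMr ?ltr0n // mulrAC ler_pdivlMr ?ltr0n //.
    by rewrite mul1r -natrM ler_nat; lia.
  move: lnq h; set y := (n.+3%:R)^-1; set w := (n.+1%:R)^-1.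
  by set u := ln _; set v := ln _; clearbody y w u v; lra.
move: IH step; set w := (n.+1%:R)^-1; set S := \sum_(_ < _) _.
by set u := ln _; set v := ln _; clearbody w u v S; lra.
Qed.

Lemma powRD_pos (a r s : R) : 0 < a -> a `^ (r + s) = a `^ r * a `^ s.
Proof. by move=> a0; rewrite powRD //; apply/implyP => _; rewrite gt_eqF. Qed.

(* For 1 <= p <= 3 and T > 0, x^p is dominated by the two moments x and x^3,
   weighted so that they balance at x = T. *)
Lemma powR_le_moments (x T p : R) : 0 <= x -> 0 < T -> 1 <= p -> p <= 3 ->
  x `^ p <= T `^ (p - 1) * x + T `^ (p - 3) * x ^+ 3.
Proof.
move=> x0 T0 p1 p3.
have [->|xn0] := eqVneq x 0.
  by rewrite powR0 ?addr_ge0 ?mulr_ge0 ?powR_ge0 ?exprn_ge0 //; apply/eqP; lra.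
have xp : 0 < x by rewrite lt_neqAle eq_sym xn0.
case: (lerP x T) => xT.
  have -> : x `^ p = x `^ (p - 1) * x.
    by rewrite -{1}(subrK 1 p) (powRD_pos (p - 1) 1 xp) powRr1 ?ltW.
  apply: (@le_trans _ _ (T `^ (p - 1) * x)).
    by rewrite ler_pM2r //; apply: ge0_ler_powR; rewrite ?nnegrE; lra.
  by rewrite lerDl mulr_ge0 ?powR_ge0 ?exprn_ge0.
have -> : x `^ p = x `^ (p - 3) * x ^+ 3 by rewrite -powR_mulrn ?ltW // -powRD_pos // subrK.
apply: (@le_trans _ _ (T `^ (p - 3) * x ^+ 3)); last first.
  by rewrite lerDr mulr_ge0 ?powR_ge0 ?ltW.
rewrite ler_pM2r ?exprn_gt0 // -(opprB 3 p) !powRN lef_pV2 ?posrE ?powR_gt0 //.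
by apply: ge0_ler_powR; rewrite ?nnegrE; lra.
Qed.

Lemma powR_ratio (a b r : R) : 0 < a -> 0 <= b -> (b / a) `^ r = b `^ r * a `^ (- r).
Proof.
by move=> a0 b0; rewrite powRM ?invr_ge0 ?(ltW a0) // -powR_inv1 ?(ltW a0) // -powRrM mulN1r.
Qed.

(* With T = b / a, both weights of powR_le_moments turn the first moment bound
   a^2 b^2 and the third moment bound b^4 into the target a^(3-p) b^(p+1). *)
Lemma ratio_weight_first (a b p : R) : 0 < a -> 0 < b ->
  (b / a) `^ (p - 1) * (a ^+ 2 * b ^+ 2) = a `^ (3 - p) * b `^ (p + 1).
Proof.
move=> a0 b0; rewrite powR_ratio ?ltW // -!powR_mulrn ?ltW //.
have -> : 3 - p = - (p - 1) + 2%:R by rewrite /=; lra.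
have -> : p + 1 = (p - 1) + 2%:R by rewrite /=; lra.
by rewrite !powRD_pos //; ring.
Qed.

Lemma ratio_weight_third (a b p : R) : 0 < a -> 0 < b ->
  (b / a) `^ (p - 3) * b ^+ 4 = a `^ (3 - p) * b `^ (p + 1).
Proof.
move=> a0 b0; rewrite powR_ratio ?ltW // -!powR_mulrn ?ltW //.
have -> : 3 - p = - (p - 3) by rewrite opprB.
have -> : p + 1 = (p - 3) + 4%:R by rewrite /=; lra.
by rewrite !powRD_pos //; ring.
Qed.

End RealPowers.

Section LineGeometry.
Variable R : realType.
Implicit Types (l : set (R * R)) (u v w : R * R) (A : {fset R}).

Lemma line_through l u v : is_line l -> l u -> l v -> u != v ->
  l = [set w | (w.1 - u.1) * (v.2 - u.2) = (w.2 - u.2) * (v.1 - u.1)].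
Proof.
move=> [a [b [c [ab0 ->]]]] /= lu lv uv; rewrite predeqE => w /=.
have d0 : (v.1 - u.1 != 0) || (v.2 - u.2 != 0).
  rewrite -negb_and; apply: contra uv => /andP[]; rewrite !subr_eq0 => /eqP e1 /eqP e2.
  by rewrite [u]surjective_pairing [v]surjective_pairing e1 e2.
have ab0' : (a != 0) || (b != 0) by case: ab0 => ->; rewrite ?orbT.
set d1 := v.1 - u.1; set d2 := v.2 - u.2; set e1 := w.1 - u.1; set e2 := w.2 - u.2.
have dir : a * d1 + b * d2 = 0 by rewrite /d1 /d2 !mulrBr; lra.
have onw : (a * w.1 + b * w.2 = c) <-> (a * e1 + b * e2 = 0).
  by rewrite /e1 /e2 !mulrBr; split=> H; lra.
have factor0 (x y z : R) : (x != 0) || (y != 0) -> x * z = 0 -> y * z = 0 -> z = 0.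
  by case/orP=> [x0 /eqP|y0 _ /eqP]; rewrite mulf_eq0 ?(negbTE x0) ?(negbTE y0) => /eqP.
rewrite onw; split=> [on0|par].
  have idA : a * (e1 * d2 - e2 * d1) = d2 * (a * e1 + b * e2) - e2 * (a * d1 + b * d2).
    by ring.
  have idB : b * (e1 * d2 - e2 * d1) = e1 * (a * d1 + b * d2) - d1 * (a * e1 + b * e2).
    by ring.
  apply/eqP; rewrite -subr_eq0; apply/eqP; apply: (factor0 a b) => //.
    by rewrite idA on0 dir !mulr0 subr0.
  by rewrite idB on0 dir !mulr0 subr0.
have cross0 : e1 * d2 - e2 * d1 = 0 by rewrite par subrr.
have id1 : d1 * (a * e1 + b * e2) = e1 * (a * d1 + b * d2) - b * (e1 * d2 - e2 * d1).
  by ring.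
have id2 : d2 * (a * e1 + b * e2) = a * (e1 * d2 - e2 * d1) + e2 * (a * d1 + b * d2).
  by ring.
apply: (factor0 d1 d2) => //.
  by rewrite id1 dir cross0 !mulr0 subr0.
by rewrite id2 dir cross0 !mulr0 addr0.
Qed.

Lemma line_unique l l' u v : is_line l -> is_line l' ->
  l u -> l v -> l' u -> l' v -> u != v -> l = l'.
Proof.
move=> hl hl' lu lv lu' lv' uv.
by rewrite (line_through hl lu lv uv) (line_through hl' lu' lv' uv).
Qed.

Definition monotone_fun (phi : R -> R) : Prop :=
  (forall x y, x <= y -> phi x <= phi y) \/ (forall x y, x <= y -> phi y <= phi x).

Lemma line_graph l : is_line l ->
  exists (c d : R * R -> R) (phi : R -> R),
    [/\ (c = fst /\ d = snd) \/ (c = snd /\ d = fst), monotone_fun phi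
      & forall u, l u -> d u = phi (c u)].
Proof.
move=> [a [b [k [ab0 ->]]]].
have [b0|b0] := eqVneq b 0.
  have a0 : a != 0 by case: ab0 => //; rewrite b0 eqxx.
  exists snd, fst, (fun=> k / a); split; [by right | by left | ].
  by move=> u /=; rewrite b0 mul0r addr0 => <-; rewrite mulrC mulKf.
exists fst, snd, (fun x => k / b - (a / b) * x); split; [by left | | ].
  have [s|s] := lerP 0 (a / b); [right|left] => x y xy; rewrite lerB //.
    exact: ler_wpM2l.
  by apply: ler_wnM2l => //; exact: ltW.
by move=> u /= <-; field.
Qed.

Definition on_line l u : bool := `[< l u >].
Definition grid A : seq (R * R) := [seq (x, y) | x <- A, y <- A].
Definition line_points A l : seq (R * R) := [seq u <- grid A | on_line l u].

Lemma mem_grid A u : (u \in grid A) = (u.1 \in A) && (u.2 \in A).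
Proof.
case: u => x y; apply/allpairsP/andP => [[[x' y'] /= [xA yA [-> ->]]] //|[xA yA]].
by exists (x, y).
Qed.

Lemma grid_uniq A : uniq (grid A).
Proof. by apply: allpairs_uniq; rewrite ?fset_uniq // => -[? ?] [? ?] _ _ [-> ->]. Qed.

Lemma line_points_uniq A l : uniq (line_points A l).
Proof. exact/filter_uniq/grid_uniq. Qed.

Lemma mem_line_points A l u :
  (u \in line_points A l) = [&& u.1 \in A, u.2 \in A & on_line l u].
Proof. by rewrite mem_filter mem_grid andbC andbA. Qed.

Lemma alpha_line_points A l : alpha A l = size (line_points A l).
Proof.
rewrite -(undup_id (line_points_uniq A l)) -card_fseq /alpha; congr #|` _ |.
by apply/fsetP => u; rewrite !inE mem_line_points andbA.
Qed.

Definition monotone_along (f : R * R -> R) (s : seq (R * R)) : Prop :=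
  sorted (fun u v => f u <= f v) s \/ sorted (fun u v => f v <= f u) s.

(* The grid points of a line, listed along the line: both coordinates are
   monotone along the list, and there are at most |A| of them since one
   coordinate determines the point. *)
Lemma line_chain A l : is_line l -> exists pts : seq (R * R),
  [/\ perm_eq pts (line_points A l), monotone_along fst pts,
      monotone_along snd pts & (size pts <= #|` A|)%N].
Proof.
move=> /line_graph [c [d [phi [cd phim onl]]]].
set P := line_points A l.
have onP u : u \in P -> d u = phi (c u).
  by rewrite mem_line_points => /and3P[_ _ /asboolP]; exact: onl.
have coordP u : u \in P -> (c u \in A) && (d u \in A).
  by rewrite mem_line_points => /and3P[uA1 uA2 _]; case: cd => -[-> ->]; rewrite ?uA1 ?uA2.
have pairP u v : c u = c v -> d u = d v -> u = v.
  by case: cd => -[-> ->]; case: u v => ? ? [? ?] /= -> ->.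
pose pts := sort (fun u v => c u <= c v) P.
have Ppts : perm_eq pts P by rewrite perm_sort.
have memP u : (u \in pts) = (u \in P) by rewrite mem_sort.
have by_c : monotone_along c pts by left; apply: sort_sorted => u v; exact: le_total.
have by_d : monotone_along d pts.
  have allP : all (mem P) pts by apply/allP => u; rewrite memP.
  case: phim => phim; [left|right]; apply: sub_in_sorted allP (sort_sorted _ _) => //.
  - by move=> u v uP vP; rewrite !onP //; exact: phim.
  - by move=> u v; exact: le_total.
  - by move=> u v uP vP; rewrite !onP //; exact: phim.
  - by move=> u v; exact: le_total.
exists pts; split=> //.
- by case: cd => -[cE dE]; rewrite -?cE -?dE.
- by case: cd => -[cE dE]; rewrite -?cE -?dE.
rewrite -(size_map c); apply: uniq_leq_size.
  rewrite map_inj_in_uniq ?(perm_uniq Ppts) ?line_points_uniq // => u v.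
  by rewrite !memP => uP vP cuv; apply: pairP => //; rewrite !onP // cuv.
by move=> x /mapP[u]; rewrite memP => /coordP /andP[] + _ ->.
Qed.

End LineGeometry.

Section RankWeights.
Variable R : realType.
Implicit Types (l : set (R * R)) (u v : R * R) (A : {fset R}).

Definition rank A (x : R) : nat := #|` [fset y in A | y < x]%fset|.

Lemma rank_le_card A x : (rank A x <= #|` A|)%N.
Proof. by apply: fsubset_leq_card; apply/fsubsetP => y; rewrite !inE => /andP[]. Qed.

Lemma rank_lt_card A x : x \in A -> (rank A x < #|` A|)%N.
Proof.
move=> xA; apply: fproper_ltn_card; rewrite fproperEneq; apply/andP; split.
  apply/negP => /eqP e; have : x \in [fset y in A | y < x]%fset by rewrite e.
  by rewrite !inE ltxx andbF.
by apply/fsubsetP => y; rewrite !inE => /andP[].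
Qed.

Lemma rank_le A x y : x <= y -> (rank A x <= rank A y)%N.
Proof.
move=> xy; apply: fsubset_leq_card; apply/fsubsetP => z.
by rewrite !inE => /andP[-> zx]; exact: lt_le_trans zx xy.
Qed.

Lemma rank_lt A x y : x \in A -> x < y -> (rank A x < rank A y)%N.
Proof.
move=> xA xy; apply: fproper_ltn_card; rewrite fproperEneq; apply/andP; split.
  apply/negP => /eqP e; have : x \in [fset z in A | z < y]%fset by rewrite !inE xA xy.
  by rewrite -e !inE ltxx andbF.
by apply/fsubsetP => z; rewrite !inE => /andP[-> zx]; exact: lt_trans zx xy.
Qed.

Definition rank_dist A (x y : R) : R := `|(rank A x)%:R - (rank A y)%:R|.
Definition weight A u v : R := ((rank_dist A u.1 v.1 + 1) * (rank_dist A u.2 v.2 + 1))^-1.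

Lemma weight_ge0 A u v : 0 <= weight A u v.
Proof. by rewrite invr_ge0; apply: mulr_ge0; apply: addr_ge0; rewrite ?normr_ge0. Qed.

Definition line_energy A l : R := \sum_(u <- grid A) \sum_(v <- grid A)
  (if (u != v) && on_line l u && on_line l v then weight A u v else 0).

Lemma monotone_rank A (f : R * R -> R) (s : seq (R * R)) : monotone_along f s ->
  monotone_upto (size s).-1 (fun t => rank A (f (nth 0 s t))).
Proof.
have lt_size t : (t < (size s).-1)%N -> (t.+1 < size s)%N by case: (size s).
by case=> /sortedP srt; [left|right] => t /lt_size /(srt 0) /(rank_le A).
Qed.

Lemma consecutive_le_energy A l (pts : seq (R * R)) :
  uniq pts -> {subset pts <= line_points A l} ->
  \sum_(t < (size pts).-1) weight A (nth 0 pts t.+1) (nth 0 pts t) <= line_energy A l.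
Proof.
move=> upts sub; set k := (size pts).-1.
have lt_size t : (t < k)%N -> (t.+1 < size pts)%N by rewrite /k; case: (size pts).
pose p t := nth 0 pts t.
pose Q := [seq (p t.+1, p t) | t <- iota 0 k].
pose W (q : (R * R) * (R * R)) :=
  if (q.1 != q.2) && on_line l q.1 && on_line l q.2 then weight A q.1 q.2 else 0.
have Pp t : (t < size pts)%N -> p t \in line_points A l by move=> ?; apply/sub/mem_nth.
have neq t : (t < k)%N -> p t.+1 != p t.
  by move=> /lt_size tk; rewrite /p nth_uniq ?(ltnW tk) // (gtn_eqF (ltnSn t)).
have -> : \sum_(t < k) weight A (p t.+1) (p t) = \sum_(q <- Q) W q.
  rewrite big_map -(big_mkord xpredT (fun t => weight A (p t.+1) (p t))).
  rewrite /index_iota subn0 big_seq [RHS]big_seq; apply: eq_bigr => t.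
  rewrite mem_iota add0n => /andP[_ tk]; rewrite /W /= neq //.
  have := Pp _ (lt_size _ tk); have := Pp t (ltnW (lt_size _ tk)).
  by rewrite !mem_line_points => /and3P[_ _ ->] /and3P[_ _ ->].
have -> : line_energy A l = \sum_(q <- [seq (u, v) | u <- grid A, v <- grid A]) W q.
  by rewrite big_allpairs.
apply: sum_le_uniq_sub.
- rewrite map_inj_in_uniq ?iota_uniq // => s t; rewrite !mem_iota !add0n.
  move=> /andP[_ /lt_size sk] /andP[_ /lt_size tk] [_ /eqP].
  by rewrite /p nth_uniq ?(ltnW sk) ?(ltnW tk) // => /eqP.
- by apply: allpairs_uniq; rewrite ?grid_uniq // => -[? ?] [? ?] _ _ [-> ->].
- move=> q /mapP[t]; rewrite mem_iota add0n => /andP[_ /lt_size tk] ->.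
  have := Pp _ tk; have := Pp _ (ltnW tk); rewrite !mem_filter => /andP[_ g0] /andP[_ g1].
  by apply/allpairsP; exists (p t.+1, p t).
- by move=> q _; rewrite /W; case: ifP => // _; exact: weight_ge0.
Qed.

(* The energy of a line with alpha >= 2 grid points controls alpha^3: list
   the points along the line and apply the one-line inequality to the rank
   sequences of their coordinates. *)
Lemma line_energy_lower A l : is_line l -> (2 <= alpha A l)%N ->
  (alpha A l)%:R ^+ 3 <= 32 * #|` A|%:R ^+ 2 * line_energy A l.
Proof.
move=> hl a2; have [pts [Ppts monx mony sizeA]] := line_chain A hl.
have size_pts : size pts = alpha A l by rewrite alpha_line_points (perm_size Ppts).
have upts : uniq pts by rewrite (perm_uniq Ppts) line_points_uniq.
have sub : {subset pts <= line_points A l} by move=> u; rewrite (perm_mem Ppts).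
rewrite -size_pts in a2 *; set k := (size pts).-1.
have chain : k%:R ^+ 3 <= 4 * (#|` A|%:R ^+ 2 * line_energy A l).
  have kn : (k <= #|` A|)%N by rewrite (leq_trans (leq_pred _)).
  have := monotone_pair_gap_bound R kn (monotone_rank A monx) (monotone_rank A mony)
    (fun t => conj (rank_le_card A _) (rank_le_card A _)); rewrite -mulrA.
  move/le_trans; apply; rewrite ler_wpM2l // ler_wpM2l ?exprn_ge0 //.
  exact: consecutive_le_energy.
have half : (size pts)%:R <= 2 * k%:R :> R.
  by rewrite -natrM ler_nat /k; case: (size pts) a2 => // a a1 /=; lia.
apply: (@le_trans _ _ ((2 * k%:R) ^+ 3)); first by rewrite lerXn2r ?nnegrE ?mulr_ge0.
move: chain; rewrite exprMn -!mulrA; set x := k%:R ^+ 3; set y := _ * line_energy A l.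
by move=> chain; lra.
Qed.

End RankWeights.

Section PairCounting.
Variable R : realType.
Implicit Types (l : set (R * R)) (u v : R * R) (A : {fset R}).

Lemma lines_through_pair_le (L : seq (set (R * R))) u v (g : R) :
  uniq L -> (forall l, l \in L -> is_line l) -> u != v -> 0 <= g ->
  \sum_(l <- L) (if on_line l u && on_line l v then g else 0) <= g.
Proof.
move=> uL Ll uv g0; rewrite -big_mkcond /=.
have [/hasP[l0 l0L /andP[l0u l0v]]|/hasPn none] :=
  boolP (has (fun l => on_line l u && on_line l v) L); last first.
  by rewrite big_seq_cond big1 // => l /andP[/none/negbTE ->].
rewrite big_seq_cond (eq_bigl (fun l => (l \in L) && (l == l0))) -?big_seq_cond.
  by rewrite -big_filter (filter_pred1_uniq uL l0L) big_seq1.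
move=> l; apply/andP/andP => -[lL]; last by move/eqP ->; rewrite l0u l0v.
case/andP => /asboolP lu /asboolP lv; split=> //; apply/eqP.
by apply: (line_unique (Ll l lL) (Ll l0 l0L) lu lv) => //; exact/asboolP.
Qed.

Lemma sum_over_lines_le (L : seq (set (R * R))) (P1 P2 : seq (R * R))
    (G : R * R -> R * R -> R) :
  uniq L -> (forall l, l \in L -> is_line l) -> (forall u v, 0 <= G u v) ->
  \sum_(l <- L) \sum_(u <- P1) \sum_(v <- P2)
     (if (u != v) && on_line l u && on_line l v then G u v else 0)
  <= \sum_(u <- P1) \sum_(v <- P2) (if u != v then G u v else 0).
Proof.
move=> uL Ll G0; rewrite exchange_big; apply: ler_sum => u _.
rewrite exchange_big; apply: ler_sum => v _.
have [->|uv] := eqVneq u v; first by rewrite big1 // => l _; rewrite eqxx.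
exact: lines_through_pair_le.
Qed.

Lemma harmonic_mono m n : (m <= n)%N ->
  \sum_(0 <= d < m) (d.+1%:R : R)^-1 <= \sum_(0 <= d < n) (d.+1%:R : R)^-1.
Proof.
move=> mn; rewrite [X in _ <= X](big_cat_nat _ (n := m)) //= lerDl.
by apply: sumr_ge0 => d _; rewrite invr_ge0.
Qed.

(* Summing 1 / (|i - j| + 1) over 0 <= j < n gives at most twice the n-th
   harmonic number: split at j = i into the two one-sided harmonic sums. *)
Lemma sum_inv_dist_le n i : (i < n)%N ->
  \sum_(0 <= j < n) (`|i%:R - j%:R| + 1 : R)^-1
    <= 2 * \sum_(0 <= d < n) (d.+1%:R : R)^-1.
Proof.
move=> iN; rewrite (big_cat_nat _ (n := i.+1)) //= mulr2n mulrDl mul1r.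
apply: lerD.
  apply: le_trans (harmonic_mono (m := i.+1) _) => //.
  rewrite big_nat_rev; apply: ler_sum_nat => j /andP[_ ji]; rewrite add0n subSS.
  rewrite natrB; last by rewrite -ltnS.
  by rewrite opprB subrKC ger0_norm ?ler0n // natr1 lexx.
apply: le_trans (harmonic_mono (m := n - i.+1) _); last exact: leq_subr.
rewrite -{1}[i.+1]add0n big_addn; apply: ler_sum => d _.
have -> : i%:R - (d + i.+1)%:R = - d.+1%:R :> R by rewrite -addSnnS natrD; ring.
rewrite normrN ger0_norm ?ler0n //.
by rewrite lef_pV2 ?posrE ?ltr0n // ?lerDl // ltr_wpDr.
Qed.

Lemma sum_const_fset A (c : R) : \sum_(i <- A) c = #|` A|%:R * c.
Proof.
by rewrite card_fset_sum1 natr_sum big_distrl /=; apply: eq_bigr => i _; rewrite mul1r.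
Qed.

Lemma row_weight_le A a : a \in A ->
  \sum_(b <- A) (rank_dist A a b + 1)^-1 <= 2 * \sum_(0 <= d < #|` A|) (d.+1%:R : R)^-1.
Proof.
move=> aA; rewrite -[X in X <= _](big_map (rank A) xpredT
  (fun j : nat => (`|(rank A a)%:R - j%:R| + 1 : R)^-1)).
apply: le_trans (sum_inv_dist_le (rank_lt_card aA)).
apply: sum_le_uniq_sub; rewrite ?iota_uniq //.
- rewrite map_inj_in_uniq ?fset_uniq // => x y xA yA exy.
  case: (ltgtP x y) => // xy.
    by have := rank_lt xA xy; rewrite exy ltnn.
  by have := rank_lt yA xy; rewrite exy ltnn.
- by move=> j /mapP[b bA ->]; rewrite mem_index_iota leq0n rank_lt_card.
Qed.

(* The total weight of all ordered pairs of distinct grid points is at most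
   n^2 (2 H_n)^2: the weight factors into two rows. *)
Lemma total_weight_le A :
  \sum_(u <- grid A) \sum_(v <- grid A) (if u != v then weight A u v else 0)
  <= #|` A|%:R ^+ 2 * (2 * \sum_(0 <= d < #|` A|) (d.+1%:R : R)^-1) ^+ 2.
Proof.
set M := 2 * _.
apply: (@le_trans _ _ (\sum_(u <- grid A) \sum_(v <- grid A) weight A u v)).
  by apply: ler_sum => u _; apply: ler_sum => v _; case: ifP => // _; exact: weight_ge0.
rewrite big_allpairs.
apply: (@le_trans _ _ (\sum_(a1 <- A) \sum_(a2 <- A) M ^+ 2)); last first.
  by rewrite !sum_const_fset mulrA -expr2.
rewrite big_seq [X in _ <= X]big_seq; apply: ler_sum => a1 a1A.
rewrite big_seq [X in _ <= X]big_seq; apply: ler_sum => a2 a2A.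
rewrite big_allpairs /=.
have -> : \sum_(b1 <- A) \sum_(b2 <- A) weight A (a1, a2) (b1, b2) =
   (\sum_(b1 <- A) (rank_dist A a1 b1 + 1)^-1) * (\sum_(b2 <- A) (rank_dist A a2 b2 + 1)^-1).
  rewrite big_distrl /=; apply: eq_bigr => b1 _; rewrite big_distrr /=.
  by apply: eq_bigr => b2 _; rewrite /weight /= invfM.
rewrite expr2; apply: ler_pM; rewrite ?row_weight_le //.
all: by apply: sumr_ge0 => b _; rewrite invr_ge0 addr_ge0 ?normr_ge0.
Qed.

End PairCounting.

Section MomentBounds.
Variable R : realType.
Implicit Types (l : set (R * R)) (u : R * R) (A : {fset R}).

Definition rich_line (A1 A : {fset R}) l : Prop :=
  [/\ is_line l, (2 <= alpha A l)%N & exists u, sqset A1 u /\ l u].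

Lemma lines_i2_rich (A1 A2 A3 Ai : {fset R}) l :
  lines_i2 A1 A2 A3 Ai l -> rich_line A1 Ai l.
Proof. by case=> -[hl [u1 [u2 [u3 [A1u1 _ _ [lu1 _ _] _]]]]] a2; split=> //; exists u1. Qed.

(* Third moment: sum_l alpha_l^3 <= 1152 n^4 ln (2 + n)^2 over distinct lines
   with at least two grid points, by bounding alpha_l^3 by the energy of l
   and summing energies over lines. *)
Lemma third_moment A (L : seq (set (R * R))) : uniq L ->
  (forall l, l \in L -> is_line l /\ (2 <= alpha A l)%N) ->
  \sum_(l <- L) (alpha A l)%:R ^+ 3 <= 1152 * #|` A|%:R ^+ 4 * ln (2 + #|` A|%:R) ^+ 2 :> R.
Proof.
move=> uL hL; set n := #|` A|%:R; set Ln := ln (2 + n).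
have H : \sum_(0 <= d < #|` A|) (d.+1%:R : R)^-1 <= 3 * Ln.
  by rewrite big_mkord harmonic_le_ln.
have Ln0 : 0 <= Ln by rewrite ln_ge0 //; have : 0 <= n by []; lra.
have H0 : 0 <= \sum_(0 <= d < #|` A|) (d.+1%:R : R)^-1.
  by apply: sumr_ge0 => d _; rewrite invr_ge0.
have energy : \sum_(l <- L) line_energy A l <= n ^+ 2 * (2 * (3 * Ln)) ^+ 2.
  apply: le_trans (sum_over_lines_le (grid A) (grid A) uL
    (fun l lL => (hL l lL).1) (weight_ge0 A)) _.
  apply: le_trans (total_weight_le A) _; rewrite ler_wpM2l ?exprn_ge0 //.
  by rewrite lerXn2r ?nnegrE ?mulr_ge0 // ler_pM2l.
apply: (@le_trans _ _ (\sum_(l <- L) 32 * n ^+ 2 * line_energy A l)).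
  rewrite big_seq [X in _ <= X]big_seq; apply: ler_sum => l /hL[hl a2].
  exact: line_energy_lower.
have n2 : 0 <= 32 * n ^+ 2 by rewrite mulr_ge0 ?exprn_ge0.
rewrite -mulr_sumr; apply: le_trans (ler_wpM2l n2 energy) _.
by rewrite le_eqVlt; apply/orP; left; apply/eqP; ring.
Qed.

Lemma alpha_le_pairs (A1 A : {fset R}) l u :
  u \in grid A1 -> on_line l u -> (2 <= alpha A l)%N ->
  (alpha A l)%:R <= 2 * \sum_(w <- grid A1) \sum_(v <- grid A)
    (if (w != v) && on_line l w && on_line l v then (1 : R) else 0).
Proof.
move=> uA1 lu a2; set P := fun v => (u != v) && on_line l u && on_line l v.
have cnt : \sum_(v <- grid A) (if P v then 1 else 0) = (count P (grid A))%:R :> R.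
  by rewrite -sum1_count natr_sum -big_mkcond.
apply: (@le_trans _ _ (2 * (count P (grid A))%:R)).
  rewrite -natrM ler_nat; suff : (alpha A l <= 1 + count P (grid A))%N by lia.
  rewrite alpha_line_points size_filter.
  apply: (@leq_trans (count (predU (pred1 u) P) (grid A))).
    by apply: sub_count => v /= onv; rewrite /P lu onv !andbT eq_sym orbN.
  apply: (@leq_trans (count (pred1 u) (grid A) + count P (grid A))).
    by rewrite -count_predUI leq_addr.
  by rewrite leq_add2r count_uniq_mem ?grid_uniq // leq_b1.
rewrite -cnt ler_pM2l // [X in _ <= X](bigD1_seq u) ?grid_uniq //= lerDl.
by apply: sumr_ge0 => w _; apply: sumr_ge0 => v _; case: ifP.
Qed.

(* First moment: a line of L_{i,2} is determined by a point u of A1 x A1 and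
   another point v of A x A on it, so sum_l alpha_l <= 2 |A1|^2 |A|^2. *)
Lemma first_moment (A1 A : {fset R}) (L : seq (set (R * R))) : uniq L ->
  (forall l, l \in L -> rich_line A1 A l) ->
  \sum_(l <- L) (alpha A l)%:R <= 2 * (#|` A1|%:R ^+ 2 * #|` A|%:R ^+ 2) :> R.
Proof.
move=> uL hL.
apply: (@le_trans _ _ (\sum_(l <- L) 2 * \sum_(u <- grid A1) \sum_(v <- grid A)
    (if (u != v) && on_line l u && on_line l v then (1 : R) else 0))).
  rewrite big_seq [X in _ <= X]big_seq; apply: ler_sum => l /hL[_ a2 [u [[u1 u2] lu]]].
  by apply: (alpha_le_pairs (u := u)) => //; [rewrite mem_grid u1 u2 | exact/asboolP].
rewrite -mulr_sumr ler_pM2l //.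
apply: le_trans (sum_over_lines_le _ _ uL (fun l lL => let: And3 hl _ _ := hL l lL in hl)
  (fun _ _ => ler01)) _.
apply: (@le_trans _ _ (\sum_(u <- grid A1) \sum_(v <- grid A) (1 : R))).
  by apply: ler_sum => u _; apply: ler_sum => v _; case: ifP.
by rewrite !big_allpairs !sum_const_fset mulr1 !expr2 !mulrA.
Qed.

End MomentBounds.

Section Interpolation.
Variable R : realType.

(* Interpolating between the first and the third moment with weight
   T = |A| / |A1| gives the p-th moment bound for 1 <= p <= 3. *)
Lemma rich_lines_moment (A1 A : {fset R}) (L : seq (set (R * R))) (p : R) :
  uniq L -> (forall l, l \in L -> rich_line A1 A l) -> (#|` A1| <= #|` A|)%N ->
  1 <= p -> p <= 3 ->
  \sum_(l <- L) (alpha A l)%:R `^ p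
    <= (2 + 1152 * ln (2 + #|` A|%:R) ^+ 2) * (#|` A1|%:R `^ (3 - p) * #|` A|%:R `^ (p + 1)).
Proof.
move=> uL hL a_le p1 p3.
set a : R := #|` A1|%:R; set b : R := #|` A|%:R; set Q := a `^ (3 - p) * b `^ (p + 1).
have Q0 : 0 <= Q by rewrite mulr_ge0 ?powR_ge0.
have C0 : 0 <= 2 + 1152 * ln (2 + b) ^+ 2.
  by apply: addr_ge0; [exact: ler0n | apply: mulr_ge0; [exact: ler0n | exact: sqr_ge0]].
have [a0|a0] := posnP #|` A1|.
  case: L uL hL => [|l L] _ hL.
    by rewrite big_nil mulr_ge0.
  have [_ _ [u [[u1 _] _]]] := hL l (mem_head _ _).
  by move: u1; rewrite (cardfs0_eq a0) inE.
have a_pos : 0 < a by rewrite ltr0n.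
have b_pos : 0 < b by rewrite ltr0n (leq_trans a0 a_le).
have T_pos : 0 < b / a by rewrite divr_gt0.
apply: (@le_trans _ _ (\sum_(l <- L) ((b / a) `^ (p - 1) * (alpha A l)%:R
                                      + (b / a) `^ (p - 3) * (alpha A l)%:R ^+ 3))).
  by apply: ler_sum => l _; apply: powR_le_moments.
rewrite big_split /= -!mulr_sumr mulrDl; apply: lerD.
  apply: le_trans (ler_wpM2l (powR_ge0 _ _) (first_moment uL hL)) _.
  by rewrite mulrCA ratio_weight_first.
have hL3 l : l \in L -> is_line l /\ (2 <= alpha A l)%N by case/hL.
apply: le_trans (ler_wpM2l (powR_ge0 _ _) (third_moment uL hL3)) _.
have -> : (b / a) `^ (p - 3) * (1152 * b ^+ 4 * ln (2 + b) ^+ 2)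
          = 1152 * ln (2 + b) ^+ 2 * ((b / a) `^ (p - 3) * b ^+ 4) by ring.
by rewrite ratio_weight_third.
Qed.

End Interpolation.

Lemma log_factor_le (R : realType) (b N : nat) : (b <= N)%N ->
  2 + 1152 * ln (2 + b%:R) ^+ 2 <= (1152 + 2 / ln 2 ^+ 2) * ln (2 + N%:R) `^ 2 :> R.
Proof.
move=> bN; set L := ln (2 + N%:R).
have N0 := ler0n R N; have b0 := ler0n R b.
have l2 : 0 < ln 2 :> R by rewrite ln_gt0 //; lra.
have l2L : ln 2 <= L by rewrite ler_ln ?posrE; lra.
have lbL : ln (2 + b%:R) <= L by rewrite ler_ln ?posrE ?lerD2l ?ler_nat //; lra.
have sq_lb : ln (2 + b%:R) ^+ 2 <= L ^+ 2.
  by rewrite lerXn2r ?nnegrE // ln_ge0 //; lra.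
have ratio : 1 <= L ^+ 2 / ln 2 ^+ 2.
  rewrite ler_pdivlMr ?exprn_gt0 // mul1r.
  by rewrite lerXn2r ?nnegrE ?(ltW l2) ?(le_trans (ltW l2) l2L).
rewrite powR_mulrn ?ln_ge0 //; last lra.
have -> : (1152 + 2 / ln 2 ^+ 2) * L ^+ 2 = 1152 * L ^+ 2 + 2 * (L ^+ 2 / ln 2 ^+ 2).
  by rewrite mulrDl mulrAC mulrA.
move: sq_lb ratio; set x := ln _ ^+ 2; set y := L ^+ 2; set z := y / _.
by move=> *; lra.
Qed.

(* The theorem, with C = 1152 + 2 / ln(2)^2 and c = 2: the sum over the
   finite support of lines_i2 is a sum over distinct rich lines. *)
Theorem mainTheorem3 (R : realType) :
  exists C c : R, 0 < C /\ 0 < c /\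
  forall A1 A2 A3 : {fset R},
    (#|` A1 | <= #|` A2 |)%N -> (#|` A2 | <= #|` A3 |)%N ->
  forall Ai : {fset R}, Ai = A1 \/ Ai = A2 \/ Ai = A3 ->
  forall p : R, 1 <= p -> p <= 3 ->
    \sum_(l \in lines_i2 A1 A2 A3 Ai) ((alpha Ai l)%:R `^ p)
      <= C * ((#|` A1 |)%:R `^ (3 - p) * (#|` Ai |)%:R `^ (p + 1))
           * (ln (2 + (#|` A3 |)%:R)) `^ c.
Proof.
have C0 : 0 < 1152 + 2 / ln 2 ^+ 2 :> R.
  by apply: ltr_wpDr; [apply: divr_ge0; [exact: ler0n | exact: sqr_ge0] | rewrite ltr0n].
exists (1152 + 2 / ln 2 ^+ 2), 2; split; first exact: C0.
split; first by rewrite ltr0n.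
move=> A1 A2 A3 h12 h23 Ai hAi p p1 p3.
have a_le : (#|` A1| <= #|` Ai|)%N by case: hAi => [->|[->|->]] //; lia.
have b_le : (#|` Ai| <= #|` A3|)%N by case: hAi => [->|[->|->]] //; lia.
have Q0 : 0 <= #|` A1|%:R `^ (3 - p) * #|` Ai|%:R `^ (p + 1) :> R.
  by rewrite mulr_ge0 ?powR_ge0.
case: finite_supportP => [_|X XP _ _].
  by rewrite big_nil; apply: mulr_ge0; [exact: mulr_ge0 (ltW C0) Q0 | exact: powR_ge0].
apply: le_trans (rich_lines_moment (fset_uniq X)
  (fun l lX => lines_i2_rich (XP l lX)) a_le p1 p3) _.
by rewrite mulrAC; apply: (ler_wpM2r Q0); exact: log_factor_le.
Qed.
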